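(* Let $\mathrm{Var}$ be a variety of algebras with one binary multiplication defined by multilinear identities, and let $f(x_1,\dots,x_n)$ be a multilinear nonassociative polynomial in three binary operations $\cdot,\prec,\succ$. If $f=0$ holds on $A^{(d* )}$ for every $A\in\mathrm{Var}$ and every locally nilpotent derivation $d$ of $A$ (i.e. for each $a\in A$ there is $m\ge1$ with $d^m(a)=0$), then $f$ is a generalized derived identity of $\mathrm{Var}$.
   Context: For an algebra $A$ with a derivation $d$, $A^{(d* )}$ denotes the system $(A,\cdot,\prec,\succ)$ where $\cdot$ is the original multiplication, $x\prec y=x\,d(y)$ and $x\succ y=d(x)\,y$. A polynomial $f$ in $\cdot,\prec,\succ$ is a generalized derived identity of $\mathrm{Var}$ if $f=0$ holds on $A^{(d* )}$ for every $A\in\mathrm{Var}$ and every derivation $d$ of $A$. *)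

From HB Require Import structures.
From mathcomp Require Import all_boot all_order all_algebra.
Set Implicit Arguments. Unset Strict Implicit. Unset Printing Implicit Defensive.
Import GRing.Theory.
Local Open Scope ring_scope.

Inductive term1 : Type :=
  | V1 of nat
  | Mul1 of term1 & term1.

Inductive term3 : Type :=
  | V3 of nat
  | Dot3 of term3 & term3
  | Prec3 of term3 & term3
  | Succ3 of term3 & term3.

Fixpoint vars1 (t : term1) : seq nat :=
  match t with V1 i => [:: i] | Mul1 a b => vars1 a ++ vars1 b end.

Fixpoint vars3 (t : term3) : seq nat :=
  match t with
  | V3 i => [:: i]
  | Dot3 a b | Prec3 a b | Succ3 a b => vars3 a ++ vars3 b
  end.

Definition poly1 (K : Type) := seq (K * term1).
Definition poly3 (K : Type) := seq (K * term3).

Definition multilinear1 (K : Type) (n : nat) (p : poly1 K) : bool :=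
  all (fun c => perm_eq (vars1 c.2) (iota 0 n)) p.
Definition multilinear3 (K : Type) (n : nat) (p : poly3 K) : bool :=
  all (fun c => perm_eq (vars3 c.2) (iota 0 n)) p.

Section Eval.
Variables (K : fieldType) (A : lmodType K) (mul : A -> A -> A) (d : A -> A).

Fixpoint eval1 (v : nat -> A) (t : term1) : A :=
  match t with V1 i => v i | Mul1 a b => mul (eval1 v a) (eval1 v b) end.

Definition evalp1 (v : nat -> A) (p : poly1 K) : A :=
  \sum_(c <- p) c.1 *: eval1 v c.2.

(* evaluation in the system A^(d-star): dot = mul, x prec y = mul x (d y), x succ y = mul (d x) y *)
Fixpoint eval3 (v : nat -> A) (t : term3) : A :=
  match t with
  | V3 i => v i
  | Dot3 a b => mul (eval3 v a) (eval3 v b)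
  | Prec3 a b => mul (eval3 v a) (d (eval3 v b))
  | Succ3 a b => mul (d (eval3 v a)) (eval3 v b)
  end.

Definition evalp3 (v : nat -> A) (p : poly3 K) : A :=
  \sum_(c <- p) c.1 *: eval3 v c.2.

End Eval.

Definition bilinear_mul (K : fieldType) (A : lmodType K) (mul : A -> A -> A) : Prop :=
  (forall (a : K) (x y z : A), mul (a *: x + y) z = a *: mul x z + mul y z) /\
  (forall (a : K) (x y z : A), mul x (a *: y + z) = a *: mul x y + mul x z).

Definition derivation (K : fieldType) (A : lmodType K) (mul : A -> A -> A)
    (d : A -> A) : Prop :=
  (forall (a : K) (x y : A), d (a *: x + y) = a *: d x + d y) /\
  (forall x y : A, d (mul x y) = mul (d x) y + mul x (d y)).

Definition locally_nilpotent (K : fieldType) (A : lmodType K) (d : A -> A) : Prop :=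
  forall a : A, exists m : nat, (1 <= m)%N /\ iter m d a = 0.

Definition in_var (K : fieldType) (S : poly1 K -> Prop)
    (A : lmodType K) (mul : A -> A -> A) : Prop :=
  bilinear_mul mul /\ forall p, S p -> forall v : nat -> A, evalp1 mul v p = 0.

Definition gen_derived_identity (K : fieldType) (S : poly1 K -> Prop)
    (f : poly3 K) : Prop :=
  forall (A : lmodType K) (mul : A -> A -> A) (d : A -> A),
    in_var S mul -> derivation mul d ->
    forall v : nat -> A, evalp3 mul d v f = 0.

From HB Require Import structures.
From mathcomp Require Import all_boot all_order all_algebra.
Set Implicit Arguments. Unset Strict Implicit. Unset Printing Implicit Defensive.
Import GRing.Theory.
Local Open Scope ring_scope.

(* Let A be an algebra of the variety, d a derivation of A and N a bound on
   the number of applications of d in the monomials of f.  Form the truncated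
   extension B = A[t]/(t^N), represented by coefficient functions 'I_N -> A,
   with product (x t^i)(y t^j) = (x y) t^(i+j) and derivation
   D (x t^i) = d(x) t^(i+1).  Then:
   - B is in the variety, because its defining identities are multilinear and
     hold on the spanning family of homogeneous elements x t^i;
   - D is a derivation of B, and it is nilpotent since it raises degrees;
   - evaluating a monomial of f at x_i t^0 gives its value in A^{d*} times
     t^k, k the number of d's in it, so summing the coefficients of the value
     of f on B^{D*} (setting t = 1) gives the value of f on A^{d*}.
   Hence the hypothesis for (B, D) forces f = 0 on A^{d*}. *)

Section LinearFunctions.
Variables (K : fieldType) (U W : lmodType K).
Implicit Types (f g : U -> W).

Lemma linear_fun0 f : linear f -> f 0 = 0.
Proof.
move=> lin_f; have := lin_f 1 0 0; rewrite !scale1r addr0.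
by move/(congr1 (fun z => z - f 0)); rewrite subrr addrK.
Qed.

Lemma linear_funD f : linear f -> {morph f : x y / x + y}.
Proof. by move=> lin_f x y; rewrite -{1}(scale1r x) lin_f scale1r. Qed.

Lemma linear_funZ f : linear f -> forall a x, f (a *: x) = a *: f x.
Proof. by move=> lin_f a x; rewrite -[a *: x]addr0 lin_f linear_fun0 ?addr0. Qed.

Lemma linear_fun_sum f (I : Type) (r : seq I) (P : pred I) (F : I -> U) :
  linear f -> f (\sum_(i <- r | P i) F i) = \sum_(i <- r | P i) f (F i).
Proof. by move=> lin_f; apply: (big_morph f (linear_funD lin_f) (linear_fun0 lin_f)). Qed.

Lemma linear_funDr f g : linear f -> linear g -> linear (fun x => f x + g x).
Proof. by move=> lin_f lin_g a x y; rewrite lin_f lin_g scalerDr addrACA. Qed.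

Lemma linear_funZr f (k : K) : linear f -> linear (fun x => k *: f x).
Proof. by move=> lin_f a x y; rewrite lin_f scalerDr !scalerA mulrC. Qed.

Lemma linear_fun_sumr (I : Type) (r : seq I) (F : I -> U -> W) :
  (forall i, linear (F i)) -> linear (fun x => \sum_(i <- r) F i x).
Proof.
move=> lin_F; elim: r => [|i r IHr] a x y; first by rewrite !big_nil scaler0 addr0.
by rewrite !big_cons; apply: (linear_funDr (lin_F i) IHr).
Qed.

End LinearFunctions.

Lemma multilinear1_var_once (K : fieldType) m (p : poly1 K) r :
  multilinear1 m p -> (r < m)%N -> all (fun c => count_mem r (vars1 c.2) == 1%N) p.
Proof.
move=> p_ml r_lt_m; elim: p p_ml => [|c p IHp] //= /andP [/permP -> p_ml].
by rewrite count_uniq_mem ?iota_uniq // mem_iota r_lt_m IHp.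
Qed.

Section MultilinearEvaluation.
Variables (K : fieldType) (B : lmodType K) (mul : B -> B -> B).
Hypothesis mul_bilinear : bilinear_mul mul.

Lemma mul_linear_l z : linear (mul^~ z).
Proof. by move=> a x y; rewrite mul_bilinear.1. Qed.

Lemma mul_linear_r z : linear (mul z).
Proof. by move=> a x y; rewrite mul_bilinear.2. Qed.

Lemma eval1_eq_on_vars (v w : nat -> B) t :
  {in vars1 t, v =1 w} -> eval1 mul v t = eval1 mul w t.
Proof.
elim: t => [i|t1 IH1 t2 IH2] /= vw; first by apply: vw; rewrite mem_head.
by rewrite IH1 ?IH2 // => i i_t; apply: vw; rewrite mem_cat i_t ?orbT.
Qed.

Lemma eval1_linear_in_var (v : nat -> B) r t :
  count_mem r (vars1 t) = 1%N -> linear (fun x => eval1 mul [eta v with r |-> x] t).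
Proof.
have eval_free x s : r \notin vars1 s -> eval1 mul [eta v with r |-> x] s = eval1 mul v s.
  move=> r_s; apply: eval1_eq_on_vars => i i_s /=.
  by case: eqP => // i_r; rewrite -i_r i_s in r_s.
elim: t => [i|t1 IH1 t2 IH2] /=.
  by rewrite addn0 => /eqP; rewrite eqb1 => /eqP i_r a x y /=; rewrite i_r eqxx.
rewrite count_cat; case r_t1: (count_mem r (vars1 t1)) => [|[|k]] //=.
- have /count_memPn r_t1' := r_t1; rewrite add0n => r_t2 a x y.
  by rewrite !(eval_free _ t1) // IH2 // mul_linear_r.
- move=> /eqP; rewrite add1n eqSS => /eqP /count_memPn r_t2 a x y.
  by rewrite !(eval_free _ t2) // IH1 // mul_linear_l.
Qed.

Lemma evalp1_linear_in_var (v : nat -> B) m p r :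
  multilinear1 m p -> (r < m)%N -> linear (fun x => evalp1 mul [eta v with r |-> x] p).
Proof.
move=> p_ml r_lt_m; have := multilinear1_var_once p_ml r_lt_m.
rewrite /evalp1; elim: p {p_ml} => [|c p IHp] /=.
  by move=> _ a x y; rewrite !big_nil scaler0 addr0.
move=> /andP [/eqP r_c r_p] a x y; rewrite !big_cons.
exact: (linear_funDr (linear_funZr c.1 (eval1_linear_in_var v r_c)) (IHp r_p)).
Qed.

Lemma evalp1_eq_below (v w : nat -> B) m p :
  multilinear1 m p -> (forall i, (i < m)%N -> v i = w i) ->
  evalp1 mul v p = evalp1 mul w p.
Proof.
move=> p_ml vw; rewrite /evalp1; elim: p p_ml => [|c p IHp] /=; first by rewrite !big_nil.
move=> /andP [c_ml p_ml]; rewrite !big_cons IHp //; congr (_ *: _ + _).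
by apply: eval1_eq_on_vars => i; rewrite (perm_mem c_ml) mem_iota; apply: vw.
Qed.

(* A multilinear identity holding on a nonempty family g of elements that
   spans B (every element is a finite sum of members of g) holds on all of B:
   the variables x_k, k < m, are expanded one at a time by linearity. *)
Lemma multilinear_identity_from_spanning (T : Type) (g : T -> B) (t0 : T) m p :
  multilinear1 m p ->
  (forall b, exists s : seq T, b = \sum_(t <- s) g t) ->
  (forall w : nat -> T, evalp1 mul (fun i => g (w i)) p = 0) ->
  forall v, evalp1 mul v p = 0.
Proof.
move=> p_ml g_span p_g.
suff vanish k : (k <= m)%N -> forall v (w : nat -> T),
    (forall i, (k <= i < m)%N -> v i = g (w i)) -> evalp1 mul v p = 0.
  by move=> v; apply: (vanish m (leqnn m) v (fun=> t0)) => i; rewrite ltnNge andbN.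
elim: k => [|k IHk] k_lt_m v w v_g.
  by rewrite (evalp1_eq_below (w := fun i => g (w i)) p_ml v_g).
have [s vk_s] := g_span (v k).
have v_upd : v =1 [eta v with k |-> v k] by move=> i /=; case: eqP => // ->.
rewrite (evalp1_eq_below p_ml (fun i _ => v_upd i)) vk_s.
rewrite (linear_fun_sum _ _ _ (evalp1_linear_in_var v p_ml k_lt_m)).
apply: big1 => t _; apply: (IHk (ltnW k_lt_m) _ [eta w with k |-> t]) => i.
case/andP; rewrite leq_eqVlt => /predU1P [<- /=|k_lt_i i_lt_m /=]; first by rewrite eqxx.
by rewrite gtn_eqF // v_g // k_lt_i.
Qed.

End MultilinearEvaluation.

Fixpoint ddeg (t : term3) : nat :=
  match t with
  | V3 _ => 0%N
  | Dot3 a b => (ddeg a + ddeg b)%N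
  | Prec3 a b => (ddeg a + (ddeg b).+1)%N
  | Succ3 a b => ((ddeg a).+1 + ddeg b)%N
  end.

(* The truncated extension B = A[t]/(t^N) of a K-module A: an element is the
   function i |-> coefficient of t^i, for i < N. *)
Section TruncatedExtension.
Variables (K : fieldType) (A : lmodType K) (N : nat).
Local Notation B := {ffun 'I_N -> A}.

(* The homogeneous element x t^k (zero when k >= N). *)
Definition homog (k : nat) (x : A) : B := [ffun i : 'I_N => if i == k :> nat then x else 0].

Lemma homog_linear k : linear (homog k).
Proof.
move=> a x y; apply/ffunP => i; rewrite !ffunE.
by case: ifP; rewrite ?scaler0 ?addr0.
Qed.

Lemma homog_out k x : (N <= k)%N -> homog k x = 0.
Proof.
move=> N_le_k; apply/ffunP => i; rewrite !ffunE.
by case: eqP => // i_k; move: (ltn_ord i); rewrite i_k ltnNge N_le_k.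
Qed.

Lemma homog_decomp (b : B) : b = \sum_(i < N) homog i (b i).
Proof.
apply/ffunP => j; rewrite sum_ffunE (bigD1 j) //= ffunE eqxx big1 ?addr0 // => i i_j.
by rewrite ffunE; case: eqP => // /val_inj ij; rewrite ij eqxx in i_j.
Qed.

Lemma sum_homog_coef (W : nmodType) (G : nat -> A -> W) k x :
  (forall i, G i 0 = 0) ->
  \sum_(i < N) G i (homog k x i) = if (k < N)%N then G k x else 0.
Proof.
move=> G0; rewrite -(big_ord1_eq (@GRing.add W) (fun i => G i x) k N) [RHS]big_mkcond /=.
by apply: eq_bigr => i _; rewrite ffunE; case: eqP.
Qed.

(* The augmentation t |-> 1: the sum of all coefficients. *)
Definition augment (b : B) : A := \sum_(i < N) b i.

Lemma augment_linear : linear augment.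
Proof.
move=> a x y; rewrite /augment scaler_sumr -big_split /=.
by apply: eq_bigr => i _; rewrite !ffunE.
Qed.

Lemma augment_homog k x : (k < N)%N -> augment (homog k x) = x.
Proof. by move=> k_lt_N; rewrite /augment (sum_homog_coef (G := fun _ z => z)) ?k_lt_N. Qed.

Variables (mul : A -> A -> A) (d : A -> A).
Hypothesis mul_bilinear : bilinear_mul mul.
Hypothesis d_linear : linear d.

Definition tmul (b c : B) : B := \sum_(i < N) \sum_(j < N) homog (i + j) (mul (b i) (c j)).

Definition tder (b : B) : B := \sum_(i < N) homog i.+1 (d (b i)).

Lemma tmul_linear_l c : linear (tmul^~ c).
Proof.
apply: linear_fun_sumr => i; apply: linear_fun_sumr => j a x y.
by rewrite !ffunE (mul_linear_l mul_bilinear) homog_linear.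
Qed.

Lemma tmul_linear_r b : linear (tmul b).
Proof.
apply: linear_fun_sumr => i; apply: linear_fun_sumr => j a x y.
by rewrite !ffunE (mul_linear_r mul_bilinear) homog_linear.
Qed.

Lemma tmul_bilinear : bilinear_mul tmul.
Proof. by split=> a x y z; [apply: tmul_linear_l | apply: tmul_linear_r]. Qed.

Lemma homog0 k : homog k 0 = 0.
Proof. exact: linear_fun0 (homog_linear k). Qed.

Lemma tmul_homog i j x y : tmul (homog i x) (homog j y) = homog (i + j) (mul x y).
Proof.
have mul0z z : mul 0 z = 0 by apply: linear_fun0 (mul_linear_l mul_bilinear z).
have mulz0 z : mul z 0 = 0 by apply: linear_fun0 (mul_linear_r mul_bilinear z).
rewrite /tmul (sum_homog_coef
  (G := fun i' z => \sum_(j' < N) homog (i' + j') (mul z (homog j y j')))); last first.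
  by move=> i'; apply: big1 => j' _; rewrite mul0z homog0.
case: (ltnP i N) => [_|N_le_i]; last by rewrite homog_out // (leq_trans N_le_i) ?leq_addr.
rewrite (sum_homog_coef (G := fun j' z => homog (i + j') (mul x z))); last first.
  by move=> j'; rewrite mulz0 homog0.
by case: (ltnP j N) => // N_le_j; rewrite homog_out // (leq_trans N_le_j) ?leq_addl.
Qed.

Lemma tmul_sum (I J : Type) (r : seq I) (s : seq J) (f : I -> nat) (g : J -> nat)
    (x : I -> A) (y : J -> A) :
  tmul (\sum_(i <- r) homog (f i) (x i)) (\sum_(j <- s) homog (g j) (y j)) =
  \sum_(i <- r) \sum_(j <- s) homog (f i + g j) (mul (x i) (y j)).
Proof.
rewrite (linear_fun_sum _ _ _ (tmul_linear_l _)); apply: eq_bigr => i _.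
rewrite (linear_fun_sum _ _ _ (tmul_linear_r _)); apply: eq_bigr => j _.
exact: tmul_homog.
Qed.

Lemma tder_linear : linear tder.
Proof.
apply: linear_fun_sumr => i a x y.
by rewrite !ffunE d_linear homog_linear.
Qed.

Lemma tder_homog i x : tder (homog i x) = homog i.+1 (d x).
Proof.
rewrite /tder (sum_homog_coef (G := fun i' z => homog i'.+1 (d z))); last first.
  by move=> i'; rewrite (linear_fun0 d_linear) homog0.
by case: ltnP => // N_le_i; rewrite homog_out // (leq_trans N_le_i).
Qed.

Lemma tder_derivation : derivation mul d -> derivation tmul tder.
Proof.
move=> [_ d_leibniz]; split; first exact: tder_linear.
move=> b c; rewrite {2}(homog_decomp c) {3}(homog_decomp b) !tmul_sum.
rewrite (linear_fun_sum _ _ _ tder_linear) -big_split; apply: eq_bigr => i _.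
rewrite (linear_fun_sum _ _ _ tder_linear) -big_split; apply: eq_bigr => j _.
by rewrite tder_homog d_leibniz (linear_funD (homog_linear _)) addSn addnS.
Qed.

Lemma iter_tder m b : iter m tder b = \sum_(i < N) homog (i + m) (iter m d (b i)).
Proof.
elim: m => [|m IHm]; first by rewrite [LHS]homog_decomp; apply: eq_bigr => i _; rewrite addn0.
rewrite iterS IHm (linear_fun_sum _ _ _ tder_linear); apply: eq_bigr => i _.
by rewrite tder_homog addnS.
Qed.

(* D raises the degree, so D^(N+1) = 0 on the truncation. *)
Lemma tder_locally_nilpotent : locally_nilpotent tder.
Proof.
move=> b; exists N.+1; split => //; rewrite iter_tder.
by apply: big1 => i _; rewrite homog_out // ltnW // ltn_addl.
Qed.

Lemma eval1_homog (deg : nat -> nat) (a : nat -> A) t :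
  eval1 tmul (fun i => homog (deg i) (a i)) t =
  homog (\sum_(k <- vars1 t) deg k) (eval1 mul a t).
Proof.
elim: t => [i|t1 IH1 t2 IH2] /=; first by rewrite big_seq1.
by rewrite IH1 IH2 tmul_homog big_cat.
Qed.

(* For multilinear polynomials the degree is the same for every monomial, so
   the whole value is homogeneous. *)
Lemma evalp1_homog (deg : nat -> nat) (a : nat -> A) m p :
  multilinear1 m p ->
  evalp1 tmul (fun i => homog (deg i) (a i)) p =
  homog (\sum_(k <- iota 0 m) deg k) (evalp1 mul a p).
Proof.
rewrite /evalp1; elim: p => [|c p IHp] /=; first by rewrite !big_nil homog0.
move=> /andP [c_ml p_ml]; rewrite !big_cons IHp // eval1_homog (perm_big _ c_ml).
by rewrite homog_linear.
Qed.

Lemma truncation_in_var (S : poly1 K -> Prop) :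
  (forall p, S p -> exists m : nat, multilinear1 m p) ->
  in_var S mul -> in_var S tmul.
Proof.
move=> S_ml [_ S_A]; split; first exact: tmul_bilinear.
move=> p Sp; have [m p_ml] := S_ml p Sp.
(* The homogeneous elements, indexed by (degree, coefficient), span B. *)
apply: (multilinear_identity_from_spanning tmul_bilinear
          (g := fun t => homog t.1 t.2) (0%N, 0) p_ml).
  by move=> b; exists [seq (val i, b i) | i <- index_enum 'I_N]; rewrite big_map -homog_decomp.
by move=> w; rewrite (evalp1_homog (fun i => (w i).1) (fun i => (w i).2) p_ml) S_A ?homog0.
Qed.

Lemma eval3_homog0 (v : nat -> A) t :
  eval3 tmul tder (fun i => homog 0 (v i)) t = homog (ddeg t) (eval3 mul d v t).
Proof.
by elim: t => [i|t1 IH1 t2 IH2|t1 IH1 t2 IH2|t1 IH1 t2 IH2] //=;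
  rewrite IH1 IH2 ?tder_homog tmul_homog.
Qed.

Lemma augment_evalp3 (v : nat -> A) (f : poly3 K) :
  all (fun c => ddeg c.2 < N)%N f ->
  augment (evalp3 tmul tder (fun i => homog 0 (v i)) f) = evalp3 mul d v f.
Proof.
rewrite /evalp3 (linear_fun_sum _ _ _ augment_linear).
elim: f => [|c f IHf] /=; first by rewrite !big_nil.
move=> /andP [c_N f_N]; rewrite !big_cons IHf //.
by rewrite (linear_funZ augment_linear) eval3_homog0 augment_homog.
Qed.

End TruncatedExtension.

Lemma ddeg_bound (K : fieldType) (f : poly3 K) :
  all (fun c => ddeg c.2 < (\max_(c <- f) ddeg c.2).+1)%N f.
Proof.
elim: f => //= c f IHf; rewrite big_cons ltnS leq_maxl /=.
by apply: sub_all IHf => c' /leq_trans; apply; rewrite ltnS leq_maxr.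
Qed.

Theorem mainTheorem10 (K : fieldType) (S : poly1 K -> Prop) (n : nat) (f : poly3 K) :
  (forall p, S p -> exists m : nat, multilinear1 m p) ->
  multilinear3 n f ->
  (forall (A : lmodType K) (mul : A -> A -> A) (d : A -> A),
      in_var S mul -> derivation mul d -> locally_nilpotent d ->
      forall v : nat -> A, evalp3 mul d v f = 0) ->
  gen_derived_identity S f.
Proof.
move=> S_ml _ f_loc A mul d A_var d_der v.
have [mul_bilinear _] := A_var; have [d_linear _] := d_der.
rewrite -(augment_evalp3 mul_bilinear d_linear v (ddeg_bound f)).
rewrite f_loc ?linear_fun0 //.
- exact: augment_linear.
- exact: truncation_in_var.
- exact: tder_derivation.
- exact: tder_locally_nilpotent.
Qed.
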